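(* The category $\mathrm{Alg}_r(G_1)$ of reachable pointed lasso automata is complete; i.e. (as it is a preorder) every set-indexed family of reachable pointed lasso automata has a meet (product) in $\mathrm{Alg}_r(G_1)$.
   Context: $\Sigma$ is a finite alphabet, $\Sigma^{\ast+}=\Sigma^\ast\times\Sigma^+$ the lassos. A pointed lasso automaton is $(X_1,X_2,\overline{x},\delta_1,\delta_2,\delta_3)$ with disjoint $X_1,X_2$, $\overline{x}\in X_1$, $\delta_1:X_1\times\Sigma\to X_1$, $\delta_2:X_1\times\Sigma\to X_2$, $\delta_3:X_2\times\Sigma\to X_2$; extend $\delta_1,\delta_3$ to words, $\delta_\circ(x,av)=\delta_3(\delta_2(x,a),v)$ for $x\in X_1$, $\delta(x,(u,v))=\delta_\circ(\delta_1(x,u),v)$. It is reachable if every $x\in X_1$ is $\delta_1(\overline{x},w)$ for some word $w$ and every $y\in X_2$ is $\delta(\overline{x},(u,v))$ for some lasso. A morphism is a pair $h_1:X_1\to Y_1$, $h_2:X_2\to Y_2$ preserving the initial state and commuting with $\delta_1,\delta_2,\delta_3$. $\mathrm{Alg}_r(G_1)$ is the category of reachable pointed lasso automata and morphisms; there is at most one morphism between any two objects, so it is a preorder. *)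

From mathcomp Require Import all_boot.
Set Implicit Arguments. Unset Strict Implicit. Unset Printing Implicit Defensive.

(* Pointed lasso automata over an alphabet Sigma (a finType).
   X1, X2 are separate types, so disjointness is automatic. *)
Record lasso_aut (Sigma : finType) := LassoAut {
  X1 : Type;
  X2 : Type;
  init : X1;
  delta1 : X1 -> Sigma -> X1;
  delta2 : X1 -> Sigma -> X2;
  delta3 : X2 -> Sigma -> X2 }.

Section Lasso.
Variable Sigma : finType.

(* A lasso (u, v) with v nonempty is represented as (u, (a, v')) with v = a v'. *)
Definition lasso := (seq Sigma * (Sigma * seq Sigma))%type.

Definition delta1_star (A : lasso_aut Sigma) (x : X1 A) (w : seq Sigma) : X1 A :=
  foldl (@delta1 _ A) x w.
Definition delta3_star (A : lasso_aut Sigma) (y : X2 A) (w : seq Sigma) : X2 A :=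
  foldl (@delta3 _ A) y w.
Definition delta_circ (A : lasso_aut Sigma) (x : X1 A) (a : Sigma) (v : seq Sigma) : X2 A :=
  delta3_star (delta2 x a) v.
Definition delta_lasso (A : lasso_aut Sigma) (x : X1 A) (l : lasso) : X2 A :=
  delta_circ (delta1_star x l.1) l.2.1 l.2.2.

Definition reachable (A : lasso_aut Sigma) : Prop :=
  (forall x : X1 A, exists w : seq Sigma, delta1_star (init A) w = x) /\
  (forall y : X2 A, exists l : lasso, delta_lasso (init A) l = y).

Record morphism (A B : lasso_aut Sigma) := Morphism {
  h1 : X1 A -> X1 B;
  h2 : X2 A -> X2 B;
  h_init : h1 (init A) = init B;
  h_delta1 : forall x a, h1 (delta1 x a) = delta1 (h1 x) a;
  h_delta2 : forall x a, h2 (delta2 x a) = delta2 (h1 x) a;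
  h_delta3 : forall y a, h2 (delta3 y a) = delta3 (h2 y) a }.

(* The preorder relation of Alg_r(G_1): there is a (necessarily unique) morphism. *)
Definition hom (A B : lasso_aut Sigma) : Prop := inhabited (morphism A B).

End Lasso.

From mathcomp Require Import all_boot.
From Stdlib Require Import ProofIrrelevance FunctionalExtensionality ClassicalEpsilon.

Set Implicit Arguments.
Unset Strict Implicit.
Unset Printing Implicit Defensive.

(* The meet of a family is the reachable part of its componentwise product.
   The projections restrict to it, and a reachable automaton B with morphisms
   into every factor maps into the product by tupling them; since morphisms
   send reachable states to reachable states, this map lands in the reachable
   part. *)

Lemma sval_inj (T : Type) (P : T -> Prop) : injective (@proj1_sig T P).
Proof. by move=> x y; apply: eq_sig_hprop => z p q; apply: proof_irrelevance. Qed.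

Section Runs.
Variables (Sigma : finType) (C : lasso_aut Sigma).

Lemma delta1_star_rcons (x : X1 C) w a :
  delta1_star x (rcons w a) = delta1 (delta1_star x w) a.
Proof. by rewrite /delta1_star -cats1 foldl_cat. Qed.

Lemma delta3_star_rcons (y : X2 C) w a :
  delta3_star y (rcons w a) = delta3 (delta3_star y w) a.
Proof. by rewrite /delta3_star -cats1 foldl_cat. Qed.

Lemma delta_lasso_rcons (x : X1 C) u b v a :
  delta_lasso x (u, (b, rcons v a)) = delta3 (delta_lasso x (u, (b, v))) a.
Proof. exact: delta3_star_rcons. Qed.

Definition reachable1 (x : X1 C) : Prop := exists w, delta1_star (init C) w = x.
Definition reachable2 (y : X2 C) : Prop := exists l, delta_lasso (init C) l = y.

Lemma reachable1_init : reachable1 (init C).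
Proof. by exists [::]. Qed.

Lemma reachable1_delta1 x a : reachable1 x -> reachable1 (delta1 x a).
Proof. by case=> w <-; exists (rcons w a); rewrite delta1_star_rcons. Qed.

Lemma reachable2_delta2 x a : reachable1 x -> reachable2 (delta2 x a).
Proof. by case=> w <-; exists (w, (a, [::])). Qed.

Lemma reachable2_delta3 y a : reachable2 y -> reachable2 (delta3 y a).
Proof.
by case=> [[u [b v]]] <-; exists (u, (b, rcons v a)); rewrite delta_lasso_rcons.
Qed.

End Runs.

Section Morphisms.
Variables (Sigma : finType) (B C D : lasso_aut Sigma).

Definition comp_morphism (m : morphism B C) (n : morphism C D) : morphism B D.
Proof.
apply: (@Morphism _ B D (h1 n \o h1 m) (h2 n \o h2 m)) => /= [|x a|x a|y a].
- by rewrite !h_init.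
- by rewrite !h_delta1.
- by rewrite !h_delta2.
- by rewrite !h_delta3.
Defined.

Variable m : morphism B C.

Lemma h1_delta1_star x w : h1 m (delta1_star x w) = delta1_star (h1 m x) w.
Proof. by elim: w x => [|a w IHw] x //=; rewrite IHw h_delta1. Qed.

Lemma h2_delta3_star y w : h2 m (delta3_star y w) = delta3_star (h2 m y) w.
Proof. by elim: w y => [|a w IHw] y //=; rewrite IHw h_delta3. Qed.

Lemma h2_delta_lasso l : h2 m (delta_lasso (init B) l) = delta_lasso (init C) l.
Proof. by rewrite /delta_lasso /delta_circ h2_delta3_star h_delta2 h1_delta1_star h_init. Qed.

Lemma reachable1_h1 x : reachable1 x -> reachable1 (h1 m x).
Proof. by case=> w <-; exists w; rewrite h1_delta1_star h_init. Qed.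

Lemma reachable2_h2 y : reachable2 y -> reachable2 (h2 m y).
Proof. by case=> l <-; exists l; rewrite h2_delta_lasso. Qed.

End Morphisms.

Section ReachablePart.
Variables (Sigma : finType) (C : lasso_aut Sigma).

Definition reachable_part : lasso_aut Sigma :=
  @LassoAut _ {x | reachable1 x} {y | reachable2 y}
    (exist _ (init C) (reachable1_init C))
    (fun x a => exist _ (delta1 (sval x) a) (reachable1_delta1 a (proj2_sig x)))
    (fun x a => exist _ (delta2 (sval x) a) (reachable2_delta2 a (proj2_sig x)))
    (fun y a => exist _ (delta3 (sval y) a) (reachable2_delta3 a (proj2_sig y))).

Definition reachable_part_incl : morphism reachable_part C :=
  @Morphism _ reachable_part C (@proj1_sig _ _) (@proj1_sig _ _)
    erefl (fun _ _ => erefl) (fun _ _ => erefl) (fun _ _ => erefl).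

Lemma reachable_part_reachable : reachable reachable_part.
Proof.
split=> [[x [w Ex]] | [y [l Ey]]].
- exists w; apply: sval_inj; rewrite /= -Ex.
  exact: (h1_delta1_star reachable_part_incl).
- exists l; apply: sval_inj; rewrite /= -Ey.
  exact: (h2_delta_lasso reachable_part_incl).
Qed.

Variables (B : lasso_aut Sigma) (reachB : reachable B) (m : morphism B C).

Definition corestrict_h1 (x : X1 B) : X1 reachable_part :=
  exist _ (h1 m x) (reachable1_h1 m (reachB.1 x)).

Definition corestrict_h2 (y : X2 B) : X2 reachable_part :=
  exist _ (h2 m y) (reachable2_h2 m (reachB.2 y)).

Definition corestrict_morphism : morphism B reachable_part.
Proof.
apply: (@Morphism _ B reachable_part corestrict_h1 corestrict_h2)
  => [|x a|x a|y a]; apply: sval_inj => /=.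
- exact: h_init.
- exact: h_delta1.
- exact: h_delta2.
- exact: h_delta3.
Defined.

End ReachablePart.

Section Product.
Variables (Sigma : finType) (I : Type) (A : I -> lasso_aut Sigma).

Definition product_aut : lasso_aut Sigma :=
  @LassoAut _ (forall i, X1 (A i)) (forall i, X2 (A i))
    (fun i => init (A i))
    (fun x a i => delta1 (x i) a)
    (fun x a i => delta2 (x i) a)
    (fun y a i => delta3 (y i) a).

Definition product_proj i : morphism product_aut (A i) :=
  @Morphism _ product_aut (A i) (fun x => x i) (fun y => y i)
    erefl (fun _ _ => erefl) (fun _ _ => erefl) (fun _ _ => erefl).

Definition product_tuple (B : lasso_aut Sigma) (m : forall i, morphism B (A i)) :
  morphism B product_aut.
Proof.
apply: (@Morphism _ B product_aut (fun x i => h1 (m i) x) (fun y i => h2 (m i) y))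
  => [|x a|x a|y a]; apply: functional_extensionality_dep => i /=.
- exact: h_init.
- exact: h_delta1.
- exact: h_delta2.
- exact: h_delta3.
Defined.

End Product.

Theorem mainTheorem15 (Sigma : finType) (I : Type) (A : I -> lasso_aut Sigma)
  (HA : forall i, reachable (A i)) :
  exists P : lasso_aut Sigma,
    reachable P /\ (forall i, hom P (A i)) /\
    (forall B : lasso_aut Sigma, reachable B -> (forall i, hom B (A i)) -> hom B P).
Proof.
clear HA.
exists (reachable_part (product_aut A)).
split; first exact: reachable_part_reachable.
split=> [i | B reachB homB].
  exact: inhabits (comp_morphism (reachable_part_incl _) (product_proj A i)).
pose m i := epsilon (homB i) (fun _ => True).
exact: inhabits (corestrict_morphism reachB (product_tuple m)).
Qed.
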